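(* Let $p$ be a prime and $n \geq 2$. Let $N$ be the cyclic group of order $p^n$, let $K$ be the Sylow $p$-subgroup of $\mathrm{Aut}(N)$, and let $G := N \rtimes K$ (with the natural action). Then $|G:G'| = p^n$, and $|\gamma_i(G):\gamma_{i+1}(G)| = p$ for every $i = 2,\dots,n$.
   Context: $G'$ is the commutator subgroup of $G$, and $\gamma_i(G)$ denotes the $i$-th term of the lower central series, with $\gamma_1(G)=G$ and $\gamma_{i+1}(G)=[\gamma_i(G),G]$. *)

From mathcomp Require Import all_boot all_fingroup all_solvable.
Set Implicit Arguments. Unset Strict Implicit. Unset Printing Implicit Defensive.

From mathcomp Require Import all_boot all_fingroup all_solvable.
From mathcomp Require Import zify.
Set Implicit Arguments. Unset Strict Implicit. Unset Printing Implicit Defensive.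
Local Open Scope group_scope.

(* Faithfulness makes K isomorphic to a Sylow subgroup of the abelian group
   Aut N, so K is abelian of order p^(n-1), G is a p-group and G' = [N, G].
   For a generator x of N the map k |-> [x, k] is injective on K, so some
   [x, k] has order at least p^(n-1); as z |-> [z, k] is an endomorphism of
   the abelian group N with kernel C_N(k), that kernel has order at most p.
   This endomorphism maps every G-invariant H <= N into [H, G], so
   |H : [H, G]| <= p, while [H, G] < H for H <> 1 by nilpotency: each step
   down the lower central series from [N, G] = G' has index exactly p. *)

Lemma card_Sylow_Aut_cyclic (gT : finGroupType) p n (N : {group gT})
    (P : {group {perm gT}}) :
  prime p -> cyclic N -> #|N| = (p ^ n.+1)%N -> p.-Sylow(Aut N) P ->
  #|P| = (p ^ n)%N.
Proof.
move=> pr_p cycN oN sylP.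
have p_gt0 := prime_gt0 pr_p; have p_gt1 := prime_gt1 pr_p.
rewrite (card_Hall sylP) card_Aut_cyclic // oN totient_pfactor //=.
rewrite partnM ?expn_gt0 ?p_gt0 -?subn1 ?subn_gt0 //.
rewrite [X in (_ * X)%N]part_pnat_id ?pnatX ?pnat_id //.
rewrite part_p'nat ?mul1n // p'natE ?subn_gt0 //.
by apply/negP => /dvdn_leq; rewrite subn_gt0 => /(_ p_gt1); lia.
Qed.

Lemma isog_conj_aut (gT : finGroupType) (N K : {group gT}) (nNK : K \subset 'N(N)) :
  'C_K(N) = 1 -> K \isog conj_aut N @* K.
Proof.
move=> tiKcN; apply/isogP; exists (restrm nNK (conj_aut N)).
  by rewrite ker_restrm ker_conj_aut tiKcN.
by rewrite morphim_restrm setIid.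
Qed.

Lemma der1_normal_mul_abelian (gT : finGroupType) (G N K : {group gT}) :
  N <| G -> N * K = G -> abelian K -> G^`(1) = [~: N, G].
Proof.
move=> nsNG defG abK; have [sNG nNG] := andP nsNG.
have sKG : K \subset G by rewrite -defG mulG_subr.
apply/eqP; rewrite eqEsubset [X in _ && X]commgSS // andbT.
have nMG : G \subset 'N([~: N, G]) by rewrite normsR.
apply: der1_min => //.
have cNGq : N / [~: N, G] \subset 'C(G / [~: N, G]) by rewrite quotient_cents2r.
have -> : G / [~: N, G] = N / [~: N, G] * (K / [~: N, G]).
  by rewrite -quotientMl ?defG ?(subset_trans sNG).
rewrite abelianM (quotient_abelian _ abK) centsC /abelian.
by rewrite !(subset_trans cNGq) ?centS ?quotientS.
Qed.

Lemma memR_norm (gT : finGroupType) (A : {group gT}) x k :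
  x \in A -> k \in 'N(A) -> [~ x, k] \in A.
Proof. by move=> xA nAk; rewrite groupM ?groupV ?memJ_norm. Qed.

Section CommutatorMorphism.

Variables (gT : finGroupType) (A : {group gT}) (k : gT).
Hypotheses (abA : abelian A) (nAk : k \in 'N(A)).

Lemma commg_morphM : {in A &, {morph (fun z => [~ z, k]) : a b / a * b}}.
Proof.
move=> a b aA bA /=; rewrite commMgJ; congr (_ * _).
by apply/conjg_fixP/commgP; apply: (centsP abA); rewrite ?memR_norm.
Qed.

Definition commg_morphism := Morphism commg_morphM.

Lemma ker_commg_morphism : 'ker commg_morphism = 'C_A[k].
Proof. by apply/setP => z; rewrite 2!in_setI (sameP cent1P commgP) !inE. Qed.

Lemma card_subcent1_order_dvd x : x \in A -> #|'C_A[k]| * #[[~ x, k]] %| #|A|.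
Proof.
move=> xA; have sCA : 'C_A[k] \subset A := subsetIl A _.
rewrite -(Lagrange sCA) dvdn_pmul2l //.
have -> : #|A : 'C_A[k]| = #|commg_morphism @* A|.
  by rewrite card_morphim setIid ker_commg_morphism.
exact: order_dvdG (mem_morphim commg_morphism xA xA).
Qed.

Lemma card_subcent1_le p n x :
  prime p -> #|A| = (p ^ n.+2)%N -> x \in A -> ~~ (#[[~ x, k]] %| p ^ n) ->
  #|'C_A[k]| <= p.
Proof.
move=> pr_p oA xA ndvd.
have dvd := card_subcent1_order_dvd xA; rewrite oA in dvd.
have [e le_e oR] := dvdn_pfactor _ _ pr_p (dvdn_trans (dvdn_mull _ (dvdnn _)) dvd).
rewrite oR dvdn_Pexp2l ?prime_gt1 // -ltnNge in ndvd.
rewrite oR -(subnK le_e) expnD dvdn_pmul2r ?expn_gt0 ?prime_gt0 // in dvd.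
apply: dvdn_leq (prime_gt0 pr_p) (dvdn_trans dvd _).
by rewrite -{2}(expn1 p) dvdn_exp2l //; lia.
Qed.

End CommutatorMorphism.

Lemma card_Ldiv_cyclic (gT : finGroupType) (G : {group gT}) d :
  cyclic G -> 0 < d -> #|'Ldiv_d(G)| <= d.
Proof.
move=> cycG d_gt0; pose L := Group (group_Ldiv d (cyclic_abelian cycG)).
have sLG : L \subset G by apply/subsetP => y /LdivP[].
rewrite -[#|_|]/#|L| -(exponent_cyclic (cyclicS sLG cycG)) dvdn_leq //.
by apply/exponentP => y /LdivP[].
Qed.

Lemma commg_cent_inj (gT : finGroupType) (x : gT) (K : {group gT}) :
  'C_K(<[x]>) = 1 -> {in K &, injective (fun k => [~ x, k])}.
Proof.
move=> tiKcx k l kK lK /= /mulgI xkl.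
have : k * l^-1 \in 'C_K(<[x]>).
  rewrite inE groupM ?groupV // cent_cycle.
  apply/cent1P/commute_sym/commgP/conjg_fixP.
  by rewrite conjgM xkl conjgK.
by rewrite tiKcx => /set1gP/eqP; rewrite -eq_mulgV1 => /eqP.
Qed.

Lemma exists_commg_ndvd (gT : finGroupType) (x : gT) (K : {group gT}) d :
    K \subset 'N(<[x]>) -> 'C_K(<[x]>) = 1 -> 0 < d -> d < #|K| ->
  exists2 k, k \in K & ~~ (#[[~ x, k]] %| d).
Proof.
move=> nxK tiKcx d_gt0 lt_dK; apply/exists_inP; apply: contraLR lt_dK.
rewrite negb_exists_in -leqNgt => /forall_inP all_dvd.
rewrite -(card_in_imset (commg_cent_inj tiKcx)).
apply: leq_trans (card_Ldiv_cyclic (cycle_cyclic x) d_gt0).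
apply/subset_leq_card/subsetP => _ /imsetP[k kK ->].
apply/LdivP; split; first by rewrite memR_norm ?cycle_id ?(subsetP nxK).
by apply/eqP; rewrite -order_dvdn -[_ %| _]negbK all_dvd.
Qed.

Lemma pnat_gt1_dvd (p m : nat) : p.-nat m -> 1 < m -> p %| m.
Proof.
move=> pm m_gt1; have /eqnP <- : pdiv m == p.
  by apply: pnatPpi pm _; rewrite pi_pdiv.
exact: pdiv_dvd.
Qed.

Section CommutatorSeries.

Variables (gT : finGroupType) (p : nat) (G A : {group gT}) (k : gT).
Hypotheses (pG : p.-group G) (nsAG : A <| G) (abA : abelian A) (kG : k \in G).

Hypothesis cAk_le_p : #|'C_A[k]| <= p.

Lemma indexg_commg_p (H : {group gT}) :
  H \subset A -> G \subset 'N(H) -> H :!=: 1 -> #|H : [~: H, G]| = p.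
Proof.
move=> sHA nHG ntH.
pose f := commg_morphism abA (subsetP (normal_norm nsAG) k kG).
have sHG := subset_trans sHA (normal_sub nsAG).
have ltHG : [~: H, G] \proper H.
  by apply: nil_comm_properl (pgroup_nil pG) sHG ntH _; rewrite subsetI subxx.
have sRH := proper_sub ltHG.
apply/eqP; rewrite eqn_leq; apply/andP; split; last first.
  have pHR : p.-nat #|H : [~: H, G]|.
    exact: pnat_dvd (dvdn_indexg _ _) (pgroupS sHG pG).
  by rewrite dvdn_leq ?pnat_gt1_dvd ?indexg_gt1 //; case/andP: ltHG.
have sfH : f @* H \subset [~: H, G].
  by apply/subsetP => _ /morphimP[z _ zH ->]; apply: mem_commg.
have cardfH : #|f @* H| = #|H : 'C_H[k]|.
  rewrite card_morphim ker_commg_morphism (setIidPr sHA).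
  by rewrite -indexgI setIA (setIidPl sHA).
have cHk_le_p : #|'C_H[k]| <= p.
  exact: leq_trans (subset_leq_card (setSI _ sHA)) cAk_le_p.
rewrite -(leq_pmul2l (cardG_gt0 [~: H, G])) Lagrange //.
rewrite -(Lagrange (subsetIl H 'C[k])).
by rewrite mulnC leq_mul // -cardfH subset_leq_card.
Qed.

Variable n : nat.
Hypotheses (pr_p : prime p) (oA : #|A| = (p ^ n)%N) (derG : G^`(1) = [~: A, G]).

Lemma lcn_sub_index j :
  j < n -> 'L_j.+2(G) \subset A /\ #|A : 'L_j.+2(G)| = (p ^ j.+1)%N.
Proof.
have nAG := normal_norm nsAG; have p_gt1 := prime_gt1 pr_p.
elim: j => [n_gt0 | j IHj lt_jn].
  rewrite lcn2 derG commg_subl nAG expn1; split=> //.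
  by rewrite indexg_commg_p // trivg_card1 oA -(expn0 p) eqn_exp2l // -lt0n.
have [sLA iL] := IHj (ltnW lt_jn).
have ntL : 'L_j.+2(G) :!=: 1.
  apply: contraTneq lt_jn => L1; rewrite L1 indexg1 oA in iL.
  by move/eqP: iL; rewrite eqn_exp2l // => /eqP->; rewrite ltnn.
have sRL : [~: 'L_j.+2(G), G] \subset 'L_j.+2(G).
  by rewrite commg_subl normal_norm ?lcn_normal.
rewrite lcnSn; split; first exact: subset_trans sRL sLA.
rewrite -(Lagrange_index sLA sRL) iL indexg_commg_p ?expnSr //.
exact: normal_norm (lcn_normal _ _).
Qed.

Lemma lcn_factor_p i : 2 <= i <= n -> #|'L_i(G) : 'L_i.+1(G)| = p.
Proof.
case: i => [|[|j]] //= lt_jn.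
have [sLA iL] := lcn_sub_index (ltnW lt_jn); have [_ iR] := lcn_sub_index lt_jn.
apply/eqP; rewrite -(eqn_pmul2l (_ : 0 < p ^ j.+1)) ?expn_gt0 ?prime_gt0 //.
by rewrite -{1}iL Lagrange_index ?lcn_subS // iR expnSr.
Qed.

End CommutatorSeries.

Theorem lemma2p7 (gT : finGroupType) (p n : nat) (G N K : {group gT}) :
  prime p -> 2 <= n ->
  cyclic N -> #|N| = (p ^ n)%N ->
  N ><| K = G ->
  'C_K(N) = 1 ->
  p.-Sylow(Aut N) (conj_aut N @* K) ->
  #|G : G^`(1)| = (p ^ n)%N /\
  (forall i : nat, 2 <= i <= n -> #|'L_i(G) : 'L_i.+1(G)| = p).
Proof.
move=> pr_p n_ge2 cycN oN sdG tiKcN sylK.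
have [nsNG sKG defG nNK _] := sdprod_context sdG.
have isoK := isog_conj_aut nNK tiKcN.
have abK : abelian K.
  by rewrite (isog_abelian isoK) (abelianS (pHall_sub sylK)) ?Aut_cyclic_abelian.
have oK : #|K| = (p ^ n.-1)%N.
  rewrite (card_isog isoK) (card_Sylow_Aut_cyclic (n := n.-1) pr_p cycN _ sylK) //.
  by rewrite (ltn_predK n_ge2).
have pG : p.-group G by rewrite /pgroup -(sdprod_card sdG) oN oK pnatM !pnatX pnat_id.
have abN := cyclic_abelian cycN.
have derG := der1_normal_mul_abelian nsNG defG abK.
have [x defN] := cyclicP cycN.
have [k kK ndvd] : exists2 k, k \in K & ~~ (#[[~ x, k]] %| p ^ (n - 2)).
  apply: exists_commg_ndvd; rewrite -?defN ?expn_gt0 ?prime_gt0 //.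
  by rewrite oK ltn_exp2l ?prime_gt1 //; lia.
have cNk_le_p : #|'C_N[k]| <= p.
  apply: (card_subcent1_le abN (subsetP nNK k kK) pr_p _ _ ndvd).
    by rewrite oN -addn2 subnK.
  by rewrite defN cycle_id.
have kG := subsetP sKG k kK.
have lcn_factor := lcn_factor_p pG nsNG abN kG cNk_le_p pr_p oN derG.
have lcn_index := lcn_sub_index pG nsNG abN kG cNk_le_p pr_p oN derG.
split=> [|i]; last exact: lcn_factor.
have [sLN iN] := lcn_index 0 (ltnW n_ge2).
rewrite -lcn2 -(Lagrange_index (normal_sub nsNG) sLN) -(index_sdprod sdG) oK iN.
by rewrite -expnSr (ltn_predK n_ge2).
Qed.
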